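(* Let $\phi$ be a posterior family for a model $\pi$ with data space $Y$ and parameter space $\Theta$, and let $f$ be a test quantity. (1) For any fixed $y\in Y$: if, as the number of sample draws $M\to\infty$, we have for all $i\in\{0,\dots,M\}$ that $Q_{\phi,f}(i\mid y)\to\frac{i+1}{M+1}$, then $q_{\phi,f}(x\mid y)=x$ for all $x\in[0,1]$. (2) If, as $M\to\infty$, we have for all $i\in\{0,\dots,M\}$ that $\int_Y Q_{\phi,f}(i\mid y)\pi_{\text{marg}}(y)\,\mathrm{d}y\to\frac{i+1}{M+1}$, then $\phi$ passes continuous SBC with respect to $f$.
   Context: Model $\pi$: prior density $\pi_{\text{prior}}(\theta)$ on $\Theta$, observation density $\pi_{\text{obs}}(y\mid\theta)$ on $Y$, $\pi_{\text{marg}}(y)=\int_\Theta\pi_{\text{obs}}(y\mid\theta)\pi_{\text{prior}}(\theta)\,\mathrm{d}\theta$, $\pi_{\text{post}}(\theta\mid y)=\pi_{\text{obs}}(y\mid\theta)\pi_{\text{prior}}(\theta)/\pi_{\text{marg}}(y)$. A posterior family is $\phi:\Theta\times Y\to\mathbb{R}^+$ with $\int_\Theta\phi(\theta\mid y)\,\mathrm{d}\theta=1$ for all $y$; a test quantity is a measurable $f:\Theta\times Y\to\mathbb{R}$. Sample quantities: for $M\in\mathbb{N}$, $\theta_1,\dots,\theta_M$ i.i.d. from $\phi(\cdot\mid y)$, $N^{\mathtt{less}}=\sum_m\mathbb{I}[f(\theta_m,y)<f(\tilde\theta,y)]$, $N^{\mathtt{equals}}=\sum_m\mathbb{I}[f(\theta_m,y)=f(\tilde\theta,y)]$,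 $K$ uniform on $\{0,\dots,N^{\mathtt{equals}}\}$, $N^{\mathtt{total}}=N^{\mathtt{less}}+K$; $R_{\phi,f}(i\mid\tilde\theta,y)=\Pr(N^{\mathtt{total}}\le i)$; $Q_{\phi,f}(i\mid y)=\int_\Theta\pi_{\text{post}}(\tilde\theta\mid y)R_{\phi,f}(i\mid\tilde\theta,y)\,\mathrm{d}\tilde\theta$. Continuous quantities: $C_{\phi,f}(s\mid y)=\int_\Theta\mathbb{I}[f(\theta,y)\le s]\phi(\theta\mid y)\,\mathrm{d}\theta$, $D_{\phi,f}(s\mid y)=\int_\Theta\mathbb{I}[f(\theta,y)=s]\phi(\theta\mid y)\,\mathrm{d}\theta$; with $U\sim\mathrm{uniform}[0,1]$, $r_{\phi,f}(x\mid\tilde\theta,y)=\Pr\big(C_{\phi,f}(f(\tilde\theta,y)\mid y)-U\,D_{\phi,f}(f(\tilde\theta,y)\mid y)\le x\big)$ and $q_{\phi,f}(x\mid y)=\int_\Theta\pi_{\text{post}}(\tilde\theta\mid y)r_{\phi,f}(x\mid\tilde\theta,y)\,\mathrm{d}\tilde\theta$ for $x\in[0,1]$. $\phi$ passes continuous SBC w.r.t. $f$ if $\int_Y q_{\phi,f}(x\mid y)\pi_{\text{marg}}(y)\,\mathrm{d}y=x$ for all $x\in[0,1]$. *)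

From HB Require Import structures.
From mathcomp Require Import all_boot all_order all_algebra.
From mathcomp Require Import all_classical all_reals all_analysis.
Set Implicit Arguments. Unset Strict Implicit. Unset Printing Implicit Defensive.
Import Order.TTheory GRing.Theory Num.Theory.
Local Open Scope classical_set_scope.
Local Open Scope ring_scope.

(* Conventions:
   - Theta, Y are measurable spaces with reference measures muT, muY
     ("d theta", "d y").
   - prior th            = pi_prior(theta)
   - obs th y            = pi_obs(y | theta)
   - phi th y            = phi(theta | y)
   - f th y              = f(theta, y)                                     *)

Section SBC.
Context {R : realType} {d1 d2 : measure_display}
  {Theta : measurableType d1} {Y : measurableType d2}.
Variables (muT : {measure set Theta -> \bar R}).

Definition pi_marg (prior : Theta -> R) (obs : Theta -> Y -> R) (y : Y) : R :=
  Rintegral muT setT (fun th => obs th y * prior th).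

Definition pi_post (prior : Theta -> R) (obs : Theta -> Y -> R)
  (th : Theta) (y : Y) : R :=
  obs th y * prior th / pi_marg prior obs y.

(* Expectation of g(theta_1,...,theta_M) for theta_1,...,theta_M i.i.d. with
   density p (w.r.t. muT), written as the iterated integral
   \int p(t1) \int p(t2) ... \int p(tM) g(t1,...,tM) dtM ... dt1. *)
Fixpoint iid_expect (p : Theta -> R) (M : nat) (g : seq Theta -> R) : R :=
  match M with
  | 0 => g [::]
  | M'.+1 => Rintegral muT setT
               (fun t => p t * iid_expect p M' (fun s => g (t :: s)))
  end.

Variables (phi : Theta -> Y -> R) (f : Theta -> Y -> R).

Definition N_less (s : seq Theta) (tht : Theta) (y : Y) : nat :=
  count (fun t => f t y < f tht y) s.
Definition N_equals (s : seq Theta) (tht : Theta) (y : Y) : nat :=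
  count (fun t => f t y == f tht y) s.

(* Pr(N^less + K <= i) for K uniform on {0,...,N^equals}, given the sample *)
Definition prob_total_le_given (i : nat) (s : seq Theta) (tht : Theta) (y : Y)
  : R :=
  (count (fun k => (N_less s tht y + k <= i)%N)
         (iota 0 (N_equals s tht y).+1))%:R
  / (N_equals s tht y).+1%:R.

Definition R_rank (M i : nat) (tht : Theta) (y : Y) : R :=
  iid_expect (phi^~ y) M (fun s => prob_total_le_given i s tht y).

Definition Q_rank (prior : Theta -> R) (obs : Theta -> Y -> R)
  (M i : nat) (y : Y) : R :=
  Rintegral muT setT (fun tht => pi_post prior obs tht y * R_rank M i tht y).

Definition C_cdf (x : R) (y : Y) : R :=
  Rintegral muT setT (fun th => (f th y <= x)%R%:R * phi th y).
Definition D_atom (x : R) (y : Y) : R :=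
  Rintegral muT setT (fun th => (f th y == x)%R%:R * phi th y).

Definition r_cont (x : R) (tht : Theta) (y : Y) : R :=
  fine ((@lebesgue_measure R)
    [set u : R | (0 <= u <= 1) /\
                 C_cdf (f tht y) y - u * D_atom (f tht y) y <= x]).

Definition q_cont (prior : Theta -> R) (obs : Theta -> Y -> R)
  (x : R) (y : Y) : R :=
  Rintegral muT setT (fun tht => pi_post prior obs tht y * r_cont x tht y).

End SBC.

Definition passes_continuous_SBC {R : realType} {d1 d2 : measure_display}
  {Theta : measurableType d1} {Y : measurableType d2}
  (muT : {measure set Theta -> \bar R}) (muY : {measure set Y -> \bar R})
  (prior : Theta -> R) (obs : Theta -> Y -> R)
  (phi : Theta -> Y -> R) (f : Theta -> Y -> R) : Prop :=
  forall x : R, 0 <= x <= 1 ->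
    Rintegral muY setT
      (fun y => q_cont muT phi f prior obs x y * pi_marg muT prior obs y) = x.

(** The counts N^less and N^equals of M draws from phi(.|y) below, resp. at,
    the level f(tht, y) are trinomial with cell probabilities
    a = Pr(f(theta, y) < f(tht, y)) and b = Pr(f(theta, y) = f(tht, y)).
    Hence R(i | tht, y) is the trinomial expectation of Pr(N^less + K <= i),
    while r(x | tht, y) = Pr(a + U b <= x).  Both are ratios clamped to
    [0, 1]: once the counts are within δM/3 of their means aM and bM, the
    discrete one at i >= (x + δ)M dominates the continuous one at x,
    and symmetrically for i <= (x - δ)M.  A second-moment (Chebyshev) penalty
    accounts for the other counts, so that
      R(i) >= r(x) - 9/(δ^2 M)  for i >= (x + δ)M,
      R(i) <= r(x) + 9/(δ^2 M)  for i <= (x - δ)M.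
    These bounds survive integration against the posterior (and, for (2),
    against the marginal).  Choosing i close to (x +- δ)M with M large, the
    convergence Q(i) -> (i + 1)/(M + 1) squeezes q(x) between x - 4δ and
    x + 4δ.  The case i = M shows that the total posterior mass, which the
    model does not force to be 1 (it is 0 where pi_marg vanishes), is 1. *)

From HB Require Import structures.
From mathcomp Require Import all_boot all_order all_algebra.
From mathcomp Require Import all_classical all_reals all_analysis.
From mathcomp Require Import measurable_realfun.
From mathcomp Require Import ring lra zify.

Set Implicit Arguments.
Unset Strict Implicit.
Unset Printing Implicit Defensive.
Import Order.TTheory GRing.Theory Num.Theory.
Local Open Scope classical_set_scope.
Local Open Scope ring_scope.

(** * Trinomial expectations *)

Section trinomial_expect.
Context {R : realFieldType}.
Implicit Types (a b c : R) (G : nat -> nat -> R).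

(* [trinomial_expect a b M G] is E[G L E], where L and E count the draws
   falling in two disjoint events of probabilities a and b among M independent
   draws; the recursion conditions on the first draw. *)
Fixpoint trinomial_expect a b (M : nat) G : R :=
  if M is M'.+1 then
    a * trinomial_expect a b M' (fun l e => G l.+1 e)
    + b * trinomial_expect a b M' (fun l e => G l e.+1)
    + (1 - a - b) * trinomial_expect a b M' G
  else G 0%N 0%N.

Lemma eq_trinomial_expect a b M G G' :
  (forall l e, (l + e <= M)%N -> G l e = G' l e) ->
  trinomial_expect a b M G = trinomial_expect a b M G'.
Proof.
elim: M G G' => [|M IH] G G' GG' /=; first exact: GG'.
congr (_ * _ + _ * _ + _ * _); apply: IH => l e le; apply: GG'.
- by rewrite addSn.
- by rewrite addnS.
- exact: leqW.
Qed.

Lemma ler_trinomial_expect a b M G G' : 0 <= a -> 0 <= b -> a + b <= 1 ->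
  (forall l e, (l + e <= M)%N -> G l e <= G' l e) ->
  trinomial_expect a b M G <= trinomial_expect a b M G'.
Proof.
move=> a0 b0 ab1; elim: M G G' => [|M IH] G G' GG' /=; first exact: GG'.
have c0 : 0 <= 1 - a - b by lra.
rewrite !lerD // ler_wpM2l //; apply: IH => l e le; apply: GG'.
- by rewrite addSn.
- by rewrite addnS.
- exact: leqW.
Qed.

Lemma trinomial_expectD a b M G G' :
  trinomial_expect a b M (fun l e => G l e + G' l e) =
  trinomial_expect a b M G + trinomial_expect a b M G'.
Proof.
elim: M G G' => [|M IH] G G' //=.
rewrite (IH (fun l e => G l.+1 e)) (IH (fun l e => G l e.+1)) IH; ring.
Qed.

Lemma trinomial_expectB a b M G G' :
  trinomial_expect a b M (fun l e => G l e - G' l e) =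
  trinomial_expect a b M G - trinomial_expect a b M G'.
Proof.
elim: M G G' => [|M IH] G G' //=.
rewrite (IH (fun l e => G l.+1 e)) (IH (fun l e => G l e.+1)) IH; ring.
Qed.

Lemma trinomial_expectZ a b M c G :
  trinomial_expect a b M (fun l e => c * G l e) = c * trinomial_expect a b M G.
Proof.
elim: M G => [|M IH] G //=.
rewrite (IH (fun l e => G l.+1 e)) (IH (fun l e => G l e.+1)) IH; ring.
Qed.

Lemma trinomial_expect_cst a b M c : trinomial_expect a b M (fun _ _ => c) = c.
Proof. by elim: M => [|M IH] //=; rewrite IH; ring. Qed.

Lemma trinomial_expect_sqr1 a b M s :
  trinomial_expect a b M (fun l _ => (l%:R + s) ^+ 2) =
  (a * M%:R + s) ^+ 2 + M%:R * a * (1 - a).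
Proof.
elim: M s => [|M IH] s /=; first by rewrite !(mulr0, mul0r, add0r, addr0).
rewrite (@eq_trinomial_expect _ _ _ (fun l _ => (l.+1%:R + s) ^+ 2)
  (fun l _ => (l%:R + (s + 1)) ^+ 2)); last by move=> l e _; rewrite -addn1 natrD; ring.
rewrite !IH -[M.+1]addn1 natrD; ring.
Qed.

Lemma trinomial_expect_sqr2 a b M s :
  trinomial_expect a b M (fun _ e => (e%:R + s) ^+ 2) =
  (b * M%:R + s) ^+ 2 + M%:R * b * (1 - b).
Proof.
elim: M s => [|M IH] s /=; first by rewrite !(mulr0, mul0r, add0r, addr0).
rewrite (@eq_trinomial_expect _ _ _ (fun _ e => (e.+1%:R + s) ^+ 2)
  (fun _ e => (e%:R + (s + 1)) ^+ 2)); last by move=> l e _; rewrite -addn1 natrD; ring.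
rewrite !IH -[M.+1]addn1 natrD; ring.
Qed.

Lemma trinomial_expect_sqr_dev a b M : 0 <= a -> 0 <= b -> a + b <= 1 ->
  trinomial_expect a b M
    (fun l e => (l%:R - a * M%:R) ^+ 2 + (e%:R - b * M%:R) ^+ 2) <= M%:R.
Proof.
move=> a0 b0 ab1; rewrite trinomial_expectD trinomial_expect_sqr1.
rewrite trinomial_expect_sqr2 !subrr expr0n /= !add0r.
have M0 : 0 <= M%:R :> R := ler0n _ _.
nra.
Qed.

End trinomial_expect.

(** * Rank distribution functions *)

Section rank_cdf.
Context {R : realFieldType}.
Implicit Types (a b t u v x : R) (i l e : nat).

Definition clamp01 t : R := Num.max 0 (Num.min 1 t).

Lemma clamp01_ge0 t : 0 <= clamp01 t.
Proof. by rewrite le_max lexx. Qed.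

Lemma clamp01_le1 t : clamp01 t <= 1.
Proof. by rewrite ge_max ler01 ge_min lexx. Qed.

Lemma clamp01_le u v : Num.min 1 u <= Num.max 0 v -> clamp01 u <= clamp01 v.
Proof.
rewrite /clamp01 !ge_max !le_max !ge_min !le_min => uv.
case: (leP u 1); case: (leP 0 v); case: (leP v 1); case: (leP 0 u); rewrite ?orbT //=;
  move: uv; rewrite /Num.min /Num.max; lra.
Qed.

Lemma count_add_leq_iota l i n :
  count (fun k => (l + k <= i)%N) (iota 0 n) = minn n (i.+1 - l).
Proof.
elim: n => [|n IH]; first by rewrite min0n.
by rewrite -addn1 iotaD count_cat IH /= add0n addn0; case: leqP => /=; lia.
Qed.

(* Pr(l + K <= i) for K uniform on {0, ..., e}: [prob_total_le_given i s tht y]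
   is [discrete_rank_cdf i (N_less s tht y) (N_equals s tht y)] by definition. *)
Definition discrete_rank_cdf i l e : R :=
  (count (fun k => (l + k <= i)%N) (iota 0 e.+1))%:R / e.+1%:R.

Lemma discrete_rank_cdfE i l e :
  discrete_rank_cdf i l e = clamp01 ((i.+1%:R - l%:R) / e.+1%:R).
Proof.
have e0 : 0 < e.+1%:R :> R := ltr0Sn _ _.
rewrite /discrete_rank_cdf count_add_leq_iota /clamp01.
have [li|il] := leqP l i.+1; last first.
  have -> : (i.+1 - l = 0)%N by lia.
  rewrite minn0 mul0r; apply/esym/max_idPl; rewrite ge_min ler_pdivrMr // mul0r.
  by rewrite subr_le0 ler_nat ltnW ?orbT.
rewrite -natrB //; set n := (i.+1 - l)%N.
have n_div_ge0 : 0 <= n%:R / e.+1%:R :> R by rewrite divr_ge0.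
have [en|ne] := leqP e.+1 n.
  rewrite divff ?gt_eqF // (min_idPl _) ?max_r ?ler01 //.
  by rewrite ler_pdivlMr // mul1r ler_nat.
rewrite (min_idPr _) ?max_r //.
by rewrite ler_pdivrMr // mul1r ler_nat ltnW.
Qed.

Lemma discrete_rank_cdf_eq1 i l e : (l + e <= i)%N -> discrete_rank_cdf i l e = 1.
Proof.
move=> lei; rewrite /discrete_rank_cdf count_add_leq_iota (minn_idPl _) ?divff //.
lia.
Qed.

(* The distribution function at x of a + U b, with U uniform on [0, 1]. *)
Definition continuous_rank_cdf x a b : R :=
  if b == 0 then (a <= x)%R%:R else clamp01 ((x - a) / b).

Lemma continuous_rank_cdf_ge0 x a b : 0 <= continuous_rank_cdf x a b.
Proof.
by rewrite /continuous_rank_cdf; case: eqP => _; [case: (a <= x)|exact: clamp01_ge0].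
Qed.

Lemma continuous_rank_cdf_le1 x a b : continuous_rank_cdf x a b <= 1.
Proof.
by rewrite /continuous_rank_cdf; case: eqP => _; [case: (a <= x)|exact: clamp01_le1].
Qed.

Lemma ltr_norml_mul3 (u D : R) : 3 * `|u| < D -> - D < 3 * u < D.
Proof. by move=> h; rewrite -ltr_norml normrM ger0_norm. Qed.

Section rank_cdf_comparison.
Variables (a b x δ : R) (M i l e : nat).
Hypothesis b0 : 0 <= b.
Hypothesis close_l : 3 * `|l%:R - a * M%:R| < δ * M%:R.
Hypothesis close_e : 3 * `|e%:R - b * M%:R| < δ * M%:R.

Lemma continuous_le_discrete_rank_cdf :
  (x + δ) * M%:R <= i%:R -> continuous_rank_cdf x a b <= discrete_rank_cdf i l e.
Proof.
move=> xI; rewrite discrete_rank_cdfE -!natr1.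
have /andP[Llo Lhi] := ltr_norml_mul3 close_l.
have /andP[Elo Ehi] := ltr_norml_mul3 close_e.
set m := M%:R in xI Llo Lhi Elo Ehi *; set L := l%:R in Llo Lhi *.
set E := e%:R in Elo Ehi *; set I := i%:R in xI *.
have m0 : 0 <= m by exact: ler0n.
have E1 : 0 < E + 1 by rewrite ltr_wpDl ?ler0n.
rewrite /continuous_rank_cdf; have [b00|bn0] := eqP.
  case: (leP a x) => ax /=; last exact: clamp01_ge0.
  have clamp1 : clamp01 1 = 1 by rewrite /clamp01 minxx max_r.
  rewrite -[X in X <= _]clamp1; apply: clamp01_le.
  rewrite minxx le_max ler_pdivlMr // mul1r; apply/orP; right.
  have : a * m <= x * m by rewrite ler_wpM2r.
  move: Ehi; rewrite b00 mul0r subr0; lra.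
have bp : 0 < b by rewrite lt_def b0 andbT; apply/eqP.
apply: clamp01_le; have [xa|ax] := leP (x - a) 0.
  rewrite le_max ge_min mulr_le0_ge0 ?orbT // invr_ge0 ltW //.
rewrite le_max; apply/orP; right; have [bxa|xab] := leP b (x - a).
  rewrite ge_min ler_pdivlMr // mul1r; apply/orP; left.
  have : b * m <= (x - a) * m by rewrite ler_wpM2r.
  lra.
rewrite ge_min; apply/orP; right; rewrite ler_pdivrMr // mulrAC ler_pdivlMr //.
have h1 : (x - a) * (E + 1) <= (x - a) * (b * m + δ * m / 3 + 1).
  by rewrite ler_pM2l //; lra.
have h2 : (x - a) * (δ * m / 3 + 1) <= b * (δ * m / 3 + 1).
  by rewrite ler_pM2r ?ltW //; lra.
have h3 : b * ((x - a) * m + 2 * (δ * m) / 3 + 1) <= b * (I + 1 - L).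
  by rewrite ler_wpM2l //; lra.
have h4 : 0 <= b * (δ * m) by rewrite mulr_ge0 //; lra.
lra.
Qed.

Lemma discrete_le_continuous_rank_cdf : 3 <= δ * M%:R ->
  i%:R <= (x - δ) * M%:R -> discrete_rank_cdf i l e <= continuous_rank_cdf x a b.
Proof.
move=> D3 xI; rewrite discrete_rank_cdfE -!natr1.
have /andP[Llo Lhi] := ltr_norml_mul3 close_l.
have /andP[Elo Ehi] := ltr_norml_mul3 close_e.
set m := M%:R in D3 xI Llo Lhi Elo Ehi *; set L := l%:R in Llo Lhi *.
set E := e%:R in Elo Ehi *; set I := i%:R in xI *.
have m0 : 0 <= m by exact: ler0n.
have E1 : 0 < E + 1 by rewrite ltr_wpDl ?ler0n.
have clamp0 : clamp01 0 = 0 by rewrite /clamp01 min_r ?ler01 ?maxxx.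
have nonpos_arg : x - a <= 0 -> clamp01 ((I + 1 - L) / (E + 1)) <= 0.
  move=> xa; rewrite -[X in _ <= X]clamp0; apply: clamp01_le.
  rewrite maxxx ge_min ler_pdivrMr // mul0r; apply/orP; right.
  have : (x - a) * m <= 0 by rewrite mulr_le0_ge0.
  lra.
rewrite /continuous_rank_cdf; have [b00|bn0] := eqP.
  case: (leP a x) => ax /=; first exact: clamp01_le1.
  by apply: nonpos_arg; lra.
have bp : 0 < b by rewrite lt_def b0 andbT; apply/eqP.
have [xa|ax] := leP (x - a) 0.
  exact: le_trans (nonpos_arg xa) (clamp01_ge0 _).
apply: clamp01_le; rewrite le_max; apply/orP; right.
have [bxa|xab] := leP b (x - a).
  by rewrite ge_min ler_pdivlMr // mul1r bxa.
rewrite ge_min; apply/orP; right; rewrite ler_pdivrMr // mulrAC ler_pdivlMr //.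
have h1 : b * (I + 1 - L) <= b * ((x - a) * m - 2 * (δ * m) / 3 + 1).
  by rewrite ler_wpM2l //; lra.
have h2 : (x - a) * (b * m - δ * m / 3 + 1) <= (x - a) * (E + 1).
  by rewrite ler_pM2l //; lra.
have h3 : 0 <= (b - (x - a)) * (δ * m / 3 - 1) by rewrite mulr_ge0 //; lra.
have h4 : 0 <= b * (δ * m) by rewrite mulr_ge0 //; lra.
lra.
Qed.

End rank_cdf_comparison.
End rank_cdf.

Section rank_penalty.
Context {R : realFieldType}.
Implicit Types (a b x δ u v : R) (M i l e : nat).

(* At least 1 unless both counts lie within δM/3 of their means. *)
Definition rank_penalty a b δ M l e : R :=
  9 * ((l%:R - a * M%:R) ^+ 2 + (e%:R - b * M%:R) ^+ 2) / (δ * M%:R) ^+ 2.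

Lemma le_add_rank_penalty u v a b δ M l e : 0 < δ * M%:R -> u <= 1 -> 0 <= v ->
  (3 * `|l%:R - a * M%:R| < δ * M%:R -> 3 * `|e%:R - b * M%:R| < δ * M%:R ->
    u <= v) ->
  u <= v + rank_penalty a b δ M l e.
Proof.
move=> D0 u1 v0 close_uv; rewrite /rank_penalty.
set D := δ * M%:R in D0 close_uv *; set dl := l%:R - _; set de := e%:R - _.
have D20 : 0 < D ^+ 2 by rewrite exprn_gt0.
have [pen1|pen1] := leP 1 (9 * (dl ^+ 2 + de ^+ 2) / D ^+ 2); first lra.
have pen0 : 0 <= 9 * (dl ^+ 2 + de ^+ 2) / D ^+ 2.
  by rewrite divr_ge0 ?(ltW D20) // mulr_ge0 // addr_ge0 // sqr_ge0.
rewrite ltr_pdivrMr // mul1r in pen1.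
suff : u <= v by lra.
have close w : w ^+ 2 <= dl ^+ 2 + de ^+ 2 -> 3 * `|w| < D.
  rewrite -(real_normK (num_real w)) => w2; have := normr_ge0 w; nra.
by apply: close_uv; apply: close; rewrite ?lerDl ?lerDr sqr_ge0.
Qed.

Lemma trinomial_expect_rank_penalty_le a b δ M : 0 <= a -> 0 <= b -> a + b <= 1 ->
  0 < δ * M%:R ->
  trinomial_expect a b M (rank_penalty a b δ M) <= 9 / (δ ^+ 2 * M%:R).
Proof.
move=> a0 b0 ab1 D0; rewrite /rank_penalty.
set D := δ * M%:R in D0 *.
have D20 : 0 < D ^+ 2 by rewrite exprn_gt0.
rewrite (@eq_trinomial_expect _ _ _ _ _
  (fun l e => 9 / D ^+ 2 * ((l%:R - a * M%:R) ^+ 2 + (e%:R - b * M%:R) ^+ 2)));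
  last by move=> l e _; rewrite mulrAC mulrC.
rewrite trinomial_expectZ (_ : 9 / (δ ^+ 2 * M%:R) = 9 / D ^+ 2 * M%:R).
  by rewrite ler_pM2l ?divr_gt0 // trinomial_expect_sqr_dev.
have M0 : M%:R != 0 :> R by apply: contraTneq D0 => M0; rewrite /D M0 mulr0 ltxx.
have δ0 : δ != 0 by apply: contraTneq D0 => δ0; rewrite /D δ0 mul0r ltxx.
by rewrite /D; field; rewrite δ0 M0.
Qed.

Section trinomial_rank_cdf.
Variables (a b x δ : R) (M i : nat).
Hypotheses (a0 : 0 <= a) (b0 : 0 <= b) (ab1 : a + b <= 1).
Hypotheses (δ0 : 0 < δ) (δM : 3 <= δ * M%:R).

Let D0 : 0 < δ * M%:R. Proof. exact: lt_le_trans δM. Qed.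

Lemma trinomial_expect_rank_cdf_ge : (x + δ) * M%:R <= i%:R ->
  continuous_rank_cdf x a b - 9 / (δ ^+ 2 * M%:R) <=
  trinomial_expect a b M (discrete_rank_cdf i).
Proof.
move=> xi; apply: (@le_trans _ _ (trinomial_expect a b M
  (fun l e => continuous_rank_cdf x a b - rank_penalty a b δ M l e))).
  rewrite trinomial_expectB trinomial_expect_cst lerD2l lerN2.
  exact: trinomial_expect_rank_penalty_le.
apply: ler_trinomial_expect => // l e _; rewrite lerBlDr.
apply: le_add_rank_penalty => //.
- exact: continuous_rank_cdf_le1.
- by rewrite discrete_rank_cdfE clamp01_ge0.
- by move=> close_l close_e;
    exact: (continuous_le_discrete_rank_cdf b0 close_l close_e xi).
Qed.

Lemma trinomial_expect_rank_cdf_le : i%:R <= (x - δ) * M%:R ->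
  trinomial_expect a b M (discrete_rank_cdf i) <=
  continuous_rank_cdf x a b + 9 / (δ ^+ 2 * M%:R).
Proof.
move=> xi; apply: (@le_trans _ _ (trinomial_expect a b M
  (fun l e => continuous_rank_cdf x a b + rank_penalty a b δ M l e))).
  apply: ler_trinomial_expect => // l e _; apply: le_add_rank_penalty => //.
  - by rewrite discrete_rank_cdfE clamp01_le1.
  - exact: continuous_rank_cdf_ge0.
  - by move=> close_l close_e;
      exact: (discrete_le_continuous_rank_cdf b0 close_l close_e δM xi).
rewrite trinomial_expectD trinomial_expect_cst lerD2l.
exact: trinomial_expect_rank_penalty_le.
Qed.

End trinomial_rank_cdf.
End rank_penalty.

(** * The limit of many draws *)

Section rank_limit.
Context {R : archiRealFieldType}.

Definition ranks_tend_to_uniform (Q : nat -> nat -> R) : Prop :=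
  forall e : R, 0 < e -> exists N : nat, forall M : nat, (N <= M)%N ->
    forall i : nat, (i <= M)%N -> `|Q M i - i.+1%:R / M.+1%:R| < e.

Lemma ranks_tend_to_uniform_diag Q P :
  ranks_tend_to_uniform Q -> (forall M, Q M M = P) -> P = 1.
Proof.
move=> QU QP; apply/eqP; rewrite -subr_eq0 -normr_le0; apply/ler_addgt0Pr => e e0.
have [N QN] := QU e e0; have := QN N (leqnn N) N (leqnn N).
by rewrite QP divff ?pnatr_eq0 // add0r => /ltW.
Qed.

Lemma exists_large_nat (δ C : R) (N : nat) : 0 < δ ->
  exists M : nat, [/\ (N <= M)%N, 3 <= δ * M%:R & C / (δ ^+ 2 * M%:R) <= δ].
Proof.
move=> δ0; set B := 3 / δ + `|C| / δ ^+ 3.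
have δ30 : 0 < δ ^+ 3 by rewrite exprn_gt0.
exists (maxn N (Num.truncn B).+1); set M := maxn _ _.
have BM : B < M%:R.
  by apply: lt_le_trans (truncnS_gt B) _; rewrite ler_nat leq_maxr.
have C0 : 0 <= `|C| / δ ^+ 3 by rewrite divr_ge0 // ltW.
have δ3 : 0 <= 3 / δ by rewrite divr_ge0 // ltW.
split; first exact: leq_maxl.
  have : 3 / δ < M%:R by apply: le_lt_trans BM; rewrite lerDl.
  by rewrite ltr_pdivrMr // mulrC => /ltW.
have : `|C| / δ ^+ 3 < M%:R by apply: le_lt_trans BM; rewrite lerDr.
rewrite ltr_pdivrMr // => CM.
have M0 : 0 < M%:R :> R by apply: le_lt_trans BM; rewrite addr_ge0.
rewrite ler_pdivrMr ?mulr_gt0 ?exprn_gt0 //.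
have -> : δ * (δ ^+ 2 * M%:R) = M%:R * δ ^+ 3 by ring.
exact: le_trans (ler_norm C) (ltW CM).
Qed.

Lemma ler_add4gt0 (u v : R) : (forall δ : R, 0 < δ -> u <= v + 4 * δ) -> u <= v.
Proof.
move=> uv; apply/ler_addgt0Pr => η η0.
by have := uv (η / 4) (divr_gt0 η0 (ltr0Sn _ 3)); rewrite mulrC divfK.
Qed.

Section rank_limit_eq.
Variables (Q : nat -> nat -> R) (x q C : R).
Hypotheses (QU : ranks_tend_to_uniform Q) (x01 : 0 <= x <= 1) (q01 : 0 <= q <= 1).
Hypothesis Q_ge : forall (δ : R) M i, 0 < δ -> 3 <= δ * M%:R ->
  (x + δ) * M%:R <= i%:R -> q - C / (δ ^+ 2 * M%:R) <= Q M i.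
Hypothesis Q_le : forall (δ : R) M i, 0 < δ -> 3 <= δ * M%:R ->
  i%:R <= (x - δ) * M%:R -> Q M i <= q + C / (δ ^+ 2 * M%:R).

Lemma rank_limit_le : q <= x.
Proof.
apply: ler_add4gt0 => δ δ0; have /andP[x0 x1] := x01; have /andP[q0 q1] := q01.
have [N QN] := QU δ0; have [M [NM δM Cδ]] := exists_large_nat C N δ0.
have [x2δ|x2δ] := leP 1 (x + 2 * δ); first lra.
have M0 : 0 <= M%:R :> R := ler0n _ _.
have xδM : 0 <= (x + δ) * M%:R by rewrite mulr_ge0 //; lra.
set i := (Num.truncn ((x + δ) * M%:R)).+1.
have i_gt : (x + δ) * M%:R < i%:R := truncnS_gt _.
have i_le : i%:R <= (x + δ) * M%:R + 1 by rewrite -natr1 lerD2r truncn_le.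
have iM : (i <= M)%N.
  have : (x + δ) * M%:R <= (1 - δ) * M%:R by rewrite ler_wpM2r //; lra.
  by rewrite -(ler_nat R); lra.
have := QN M NM i iM; rewrite ltr_norml => /andP[_].
set fr := _ / _ => Qi.
have frac : fr <= x + 2 * δ.
  by rewrite /fr ler_pdivrMr ?ltr0Sn // -[i.+1%:R]natr1 -[M.+1%:R]natr1; lra.
have := Q_ge δ0 δM (ltW i_gt); lra.
Qed.

Lemma rank_limit_ge : x <= q.
Proof.
apply: ler_add4gt0 => δ δ0; have /andP[x0 x1] := x01; have /andP[q0 q1] := q01.
have [N QN] := QU δ0; have [M [NM δM Cδ]] := exists_large_nat C N δ0.
have [xδ|xδ] := ltP x δ; first lra.
have M0 : 0 <= M%:R :> R := ler0n _ _.
have xδM : 0 <= (x - δ) * M%:R by rewrite mulr_ge0 //; lra.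
set i := Num.truncn ((x - δ) * M%:R).
have i_le : i%:R <= (x - δ) * M%:R by rewrite truncn_le.
have i_gt : (x - δ) * M%:R < i%:R + 1 by rewrite natr1; exact: truncnS_gt.
have iM : (i <= M)%N.
  have : (x - δ) * M%:R <= 1 * M%:R by rewrite ler_wpM2r //; lra.
  by rewrite -(ler_nat R); lra.
have := QN M NM i iM; rewrite ltr_norml => /andP[+ _].
set fr := _ / _ => Qi.
have frac : x - 2 * δ <= fr.
  by rewrite /fr ler_pdivlMr ?ltr0Sn // -[i.+1%:R]natr1 -[M.+1%:R]natr1; lra.
have := Q_le δ0 δM i_le; lra.
Qed.

Lemma rank_limit_eq : q = x.
Proof. by apply/le_anti; rewrite rank_limit_le rank_limit_ge. Qed.

End rank_limit_eq.
End rank_limit.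

(** * Integration *)

Lemma measurable_natr_bool {R : realType} d (T : measurableType d) (b : T -> bool) :
  measurable_fun setT b -> measurable_fun setT (fun t => (b t)%:R : R).
Proof.
move=> mb; rewrite (_ : (fun t => _) = (fun t => if b t then 1 else 0)).
  exact: measurable_fun_ifT.
by apply/funext => t; case: (b t).
Qed.

Section integrable_density.
Context {R : realType} d (T : measurableType d) (mu : {measure set T -> \bar R}).

Lemma integrable_ge0 (g : T -> R) : measurable_fun setT g -> (forall t, 0 <= g t) ->
  (\int[mu]_t (g t)%:E < +oo)%E -> mu.-integrable setT (EFin \o g).
Proof.
move=> mg g0 gfin; apply/integrableP; split; first exact/measurable_EFinP.
by under eq_integral do rewrite /= ger0_norm //.
Qed.

Lemma integrable_dominated (g h : T -> R) :
  mu.-integrable setT (EFin \o h) -> measurable_fun setT g ->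
  (forall t, `|g t| <= `|h t|) -> mu.-integrable setT (EFin \o g).
Proof.
move=> ih mg gh; apply: le_integrable ih => //; first exact/measurable_EFinP.
by move=> t _ /=; rewrite lee_fin.
Qed.

Lemma integrableM_01 (g h : T -> R) :
  mu.-integrable setT (EFin \o g) -> measurable_fun setT h ->
  (forall t, 0 <= h t <= 1) -> mu.-integrable setT (EFin \o (fun t => g t * h t)).
Proof.
move=> ig mh h01; apply: (integrable_dominated ig).
  apply: measurable_funM => //; apply/measurable_EFinP; exact: (measurable_int _ ig).
move=> t; have /andP[h0 h1] := h01 t.
by rewrite normrM (ger0_norm h0) ler_piMr.
Qed.

Variable p : T -> R.
Hypotheses (mp : measurable_fun setT p) (p0 : forall t, 0 <= p t).
Hypothesis p1 : (\int[mu]_t (p t)%:E = 1)%E.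

Lemma integrable_density : mu.-integrable setT (EFin \o p).
Proof. by apply: integrable_ge0 => //; rewrite p1 ltry. Qed.

Lemma integrable_density_event (A : T -> bool) : measurable_fun setT A ->
  mu.-integrable setT (EFin \o (fun t => p t * (A t)%:R)).
Proof.
move=> mA; apply: integrableM_01 integrable_density (measurable_natr_bool mA) _.
by move=> t; case: (A t); rewrite /= ?lexx ?ler01.
Qed.

Variables A B : T -> bool.
Hypotheses (mA : measurable_fun setT A) (mB : measurable_fun setT B).
Hypothesis AB : forall t, A t -> ~~ B t.

Lemma iid_expect_counts M G :
  iid_expect mu p M (fun s => G (count A s) (count B s)) =
  trinomial_expect (Rintegral mu setT (fun t => p t * (A t)%:R))
    (Rintegral mu setT (fun t => p t * (B t)%:R)) M G.
Proof.
have iA := integrable_density_event mA; have iB := integrable_density_event mB.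
have ip := integrable_density.
have P1 : Rintegral mu setT p = 1 by rewrite /Rintegral p1.
set a := Rintegral mu setT (fun t => p t * (A t)%:R).
set b := Rintegral mu setT (fun t => p t * (B t)%:R).
elim: M G => [|M IH] G //=.
set EA := trinomial_expect a b M (fun l e => G l.+1 e).
set EB := trinomial_expect a b M (fun l e => G l e.+1).
set EC := trinomial_expect a b M G.
transitivity (Rintegral mu setT (fun t => EA * (p t * (A t)%:R)
   + EB * (p t * (B t)%:R) + EC * (p t - p t * (A t)%:R - p t * (B t)%:R))).
  apply: eq_Rintegral => t _; rewrite (IH (fun l e => G (A t + l)%N (B t + e)%N)).
  have := @AB t; case: (A t) => [/(_ isT)|]; case: (B t) => //= _;
    by rewrite -?/EA -?/EB -?/EC; ring.
have ipA := integrableB measurableT ip iA; have iC := integrableB measurableT ipA iB.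
have iEA := integrableZl measurableT EA iA; have iEB := integrableZl measurableT EB iB.
have iEC := integrableZl measurableT EC iC.
rewrite !RintegralD ?RintegralZl ?RintegralB ?P1 -/a -/b //.
  ring.
exact: (integrableD measurableT iEA iEB).
Qed.

Lemma density_event_masses :
  [/\ 0 <= Rintegral mu setT (fun t => p t * (A t)%:R),
      0 <= Rintegral mu setT (fun t => p t * (B t)%:R) &
      Rintegral mu setT (fun t => p t * (A t)%:R) +
      Rintegral mu setT (fun t => p t * (B t)%:R) <= 1].
Proof.
have iA := integrable_density_event mA; have iB := integrable_density_event mB.
split; try by apply: Rintegral_ge0 => t _; rewrite mulr_ge0.
have P1 : Rintegral mu setT p = 1 by rewrite /Rintegral p1.
rewrite -RintegralD // -[X in _ <= X]P1; apply: le_Rintegral => //.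
- exact: (integrableD measurableT iA iB).
- exact: integrable_density.
move=> t _; rewrite -mulrDr ler_piMr //.
have := @AB t; case: (A t) => [/(_ isT)|_]; case: (B t) => //= _;
  by rewrite ?add0r ?addr0 ?lexx ?ler01.
Qed.

End integrable_density.

Section lebesgue_tie_break.
Context {R : realType}.
Notation lambda := (@lebesgue_measure R).

Lemma lebesgue_itv_max0 (t : R) :
  fine (lambda [set` `[Num.max 0 t, 1]]) = clamp01 (1 - t).
Proof.
rewrite lebesgue_measure_itv /= lte_fin /clamp01.
have [t0|t0] := leP t 0.
  rewrite ltr01 /= oppr0 addr0 min_l ?max_r //; lra.
case: ltP => t1 /=.
  by rewrite min_r ?max_r //; lra.
by rewrite max_l // ge_min; apply/orP; right; lra.
Qed.

Lemma lebesgue_tie_break (c b x : R) : 0 <= b ->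
  fine (lambda [set u | (0 <= u <= 1) /\ c - u * b <= x]) =
  continuous_rank_cdf x (c - b) b.
Proof.
move=> b0; rewrite /continuous_rank_cdf; have [->|bn0] := eqP.
  rewrite subr0; under eq_set do rewrite mulr0 subr0.
  case: (leP c x) => cx /=.
    rewrite (_ : [set u | _] = [set` `[0, 1]]).
      by rewrite lebesgue_measure_itv /= lte_fin ltr01 /= oppr0 addr0.
    by apply/seteqP; split => u /=; rewrite in_itv /=; [case|].
  rewrite (_ : [set u | _] = set0) ?measure0 //.
  by apply/seteqP; split => u // [].
have bp : 0 < b by rewrite lt_def b0 andbT; apply/eqP.
rewrite (_ : [set u | _] = [set` `[Num.max 0 ((c - x) / b), 1]]).
  rewrite lebesgue_itv_max0; congr clamp01; field; exact/eqP.
apply/seteqP; split => u /=; rewrite in_itv /= ge_max ler_pdivrMr //.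
  by move=> [/andP[-> ->]] /=; lra.
by move=> /andP[/andP[-> ?] ->]; split => //; lra.
Qed.

End lebesgue_tie_break.

Lemma measurable_inv {R : realType} : measurable_fun setT (@GRing.inv R).
Proof.
rewrite (_ : setT = [set x | x != 0] `|` [set 0]); last first.
  by apply/seteqP; split => x //= _; case: (eqVneq x 0) => [->|]; [right|left].
apply/measurable_funU; [exact: open_measurable (@open_neq R 0)|exact: measurable_set1|].
split; last exact: measurable_fun_set1.
apply: open_continuous_measurable_fun; first exact: open_neq.
by move=> x /set_mem /= x0; exact: inv_continuous.
Qed.

Section measurable_rank_cdf.
Context {R : realType} d (X : measurableType d).
Variables a b : X -> R.
Hypotheses (ma : measurable_fun setT a) (mb : measurable_fun setT b).

Lemma measurable_trinomial_expect M G :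
  measurable_fun setT (fun z => trinomial_expect (a z) (b z) M G).
Proof.
elim: M G => [|M IH] G /=; first exact: measurable_cst.
by apply: measurable_funD; [apply: measurable_funD|];
  apply: measurable_funM => //; do ?apply: measurable_funB.
Qed.

Lemma measurable_continuous_rank_cdf x :
  measurable_fun setT (fun z => continuous_rank_cdf x (a z) (b z)).
Proof.
apply: measurable_fun_ifT; first exact: measurable_fun_eqr.
  by apply: measurable_natr_bool; exact: measurable_fun_ler.
apply: measurable_maxr => //; apply: measurable_minr => //.
apply: measurable_funM; first exact: measurable_funB.
exact: measurableT_comp measurable_inv mb.
Qed.

End measurable_rank_cdf.

Section measurable_Rintegral.
Context {R : realType} d d' (T : measurableType d) (X : measurableType d').
Variable mu : {measure set T -> \bar R}.
Hypothesis mu_sigma_finite : sigma_finite setT mu.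

(* [mu] itself, with the sigma-finite measure structure Fubini-Tonelli asks for. *)
Definition sigma_finite_copy : set T -> \bar R := mu.
HB.instance Definition _ := Measure.copy sigma_finite_copy mu.
HB.instance Definition _ :=
  @Measure_isSigmaFinite.Build _ _ _ sigma_finite_copy mu_sigma_finite.

Lemma measurable_fun_Rintegral (F : X -> T -> R) :
  measurable_fun setT (fun p : X * T => F p.1 p.2) -> (forall x t, 0 <= F x t) ->
  measurable_fun setT (fun x => Rintegral mu setT (F x)).
Proof.
move=> mF F0; apply: measurableT_comp => //.
apply: (@measurable_fun_fubini_tonelli_F _ _ _ _ _ sigma_finite_copy
  (fun p => (F p.1 p.2)%:E)); first exact/measurable_EFinP.
by move=> p; rewrite lee_fin.
Qed.

End measurable_Rintegral.

(** * Ranks in the SBC model *)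

Section sbc_model.
Context {R : realType} {d1 d2 : measure_display}
  {Theta : measurableType d1} {Y : measurableType d2}.
Variables (muT : {measure set Theta -> \bar R}) (prior : Theta -> R)
  (obs phi f : Theta -> Y -> R).
Hypothesis muT_sigma_finite : sigma_finite setT muT.
Hypotheses (mprior : measurable_fun setT prior) (prior0 : forall th, 0 <= prior th).
Hypothesis mobs : measurable_fun setT (fun p : Theta * Y => obs p.1 p.2).
Hypothesis obs0 : forall th y, 0 <= obs th y.
Hypothesis mphi : measurable_fun setT (fun p : Theta * Y => phi p.1 p.2).
Hypothesis phi0 : forall th y, 0 <= phi th y.
Hypothesis phi1 : forall y, (\int[muT]_th (phi th y)%:E = 1)%E.
Hypothesis mf : measurable_fun setT (fun p : Theta * Y => f p.1 p.2).

Local Notation post := (pi_post muT prior obs).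
Local Notation marg := (pi_marg muT prior obs).

Definition prob_below tht y :=
  Rintegral muT setT (fun t => phi t y * (f t y < f tht y)%R%:R).
Definition prob_tie tht y :=
  Rintegral muT setT (fun t => phi t y * (f t y == f tht y)%R%:R).
Definition post_avg (g : Theta -> Y -> R) y :=
  Rintegral muT setT (fun tht => post tht y * g tht y).
Definition posterior_mass := post_avg (fun _ _ => 1).

Let mphi_y y : measurable_fun setT (phi^~ y).
Proof. exact: measurable_fun_pair1 mphi. Qed.

Let mf_y y : measurable_fun setT (f^~ y).
Proof. exact: measurable_fun_pair1 mf. Qed.

Let mbelow tht y : measurable_fun setT (fun t => f t y < f tht y).
Proof. exact: measurable_fun_ltr (mf_y y) (measurable_cst _). Qed.

Let mtie tht y : measurable_fun setT (fun t => f t y == f tht y).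
Proof. exact: measurable_fun_eqr (mf_y y) (measurable_cst _). Qed.

Let below_tie tht y t : f t y < f tht y -> f t y != f tht y.
Proof. by move=> /lt_eqF ->. Qed.

Lemma prob_below_tie tht y :
  [/\ 0 <= prob_below tht y, 0 <= prob_tie tht y &
      prob_below tht y + prob_tie tht y <= 1].
Proof.
exact: (density_event_masses (mphi_y y) (phi0^~ y) (phi1 y) (mbelow tht y)
  (mtie tht y) (@below_tie tht y)).
Qed.

Lemma R_rankE M i tht y : R_rank muT phi f M i tht y =
  trinomial_expect (prob_below tht y) (prob_tie tht y) M (discrete_rank_cdf i).
Proof.
exact: (iid_expect_counts (mphi_y y) (phi0^~ y) (phi1 y) (mbelow tht y)
  (mtie tht y) (@below_tie tht y)).
Qed.

Lemma r_contE x tht y : r_cont muT phi f x tht y =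
  continuous_rank_cdf x (prob_below tht y) (prob_tie tht y).
Proof.
have [_ tie0 _] := prob_below_tie tht y.
have ibelow := integrable_density_event (mphi_y y) (phi0^~ y) (phi1 y) (mbelow tht y).
have itie := integrable_density_event (mphi_y y) (phi0^~ y) (phi1 y) (mtie tht y).
rewrite /r_cont; have -> : D_atom muT phi f (f tht y) y = prob_tie tht y.
  by apply: eq_Rintegral => t _; rewrite mulrC.
have -> : C_cdf muT phi f (f tht y) y = prob_below tht y + prob_tie tht y.
  rewrite -RintegralD //; apply: eq_Rintegral => t _; rewrite mulrC -mulrDr le_eqVlt.
  by case: ltgtP => //=; rewrite ?addr0 ?add0r.
by rewrite lebesgue_tie_break // addrK.
Qed.

Let mswap : measurable_fun setT (fun q : Y * Theta => (q.2, q.1)).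
Proof. by apply: measurable_fun_pair; [exact: measurable_snd|exact: measurable_fst]. Qed.

Lemma measurable_marg : measurable_fun setT marg.
Proof.
apply: (measurable_fun_Rintegral muT_sigma_finite (F := fun y t => obs t y * prior t)).
  apply: measurable_funM; first exact: measurableT_comp mobs mswap.
  exact: measurableT_comp mprior measurable_snd.
by move=> y t; rewrite mulr_ge0.
Qed.

Lemma marg_ge0 y : 0 <= marg y.
Proof. by apply: Rintegral_ge0 => t _; rewrite mulr_ge0. Qed.

Lemma post_ge0 tht y : 0 <= post tht y.
Proof. by rewrite /pi_post divr_ge0 ?mulr_ge0 ?marg_ge0. Qed.

Lemma measurable_post : measurable_fun setT (fun z : Theta * Y => post z.1 z.2).
Proof.
apply: measurable_funM; last first.
  exact: measurableT_comp measurable_inv (measurableT_comp measurable_marg measurable_snd).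
by apply: measurable_funM => //; exact: measurableT_comp mprior measurable_fst.
Qed.

Lemma integrable_post y : muT.-integrable setT (EFin \o (post^~ y)).
Proof.
have mlik : measurable_fun setT (fun t => obs t y * prior t).
  by apply: measurable_funM => //; exact: measurable_fun_pair1 mobs.
have lik0 t : 0 <= obs t y * prior t by rewrite mulr_ge0.
have [lik_oo|lik_fin] := eqVneq (\int[muT]_t (obs t y * prior t)%:E)%E +oo%E.
  (* then pi_marg y = fine +oo = 0, and the posterior is 0 since x / 0 = 0 *)
  rewrite (_ : post^~ y = cst 0); first exact: integrable0.
  by apply/funext => t; rewrite /pi_post /pi_marg /Rintegral lik_oo /= invr0 mulr0.
have lik_int : muT.-integrable setT (EFin \o (fun t => obs t y * prior t)).
  by apply: integrable_ge0 => //; rewrite ltey.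
apply: eq_integrable (integrableZl measurableT (marg y)^-1 lik_int) => // t _ /=.
by rewrite -EFinM /pi_post mulrC.
Qed.

Let mpair2 : measurable_fun setT (fun q : (Theta * Y) * Theta => (q.2, q.1.2)).
Proof.
apply: measurable_fun_pair; first exact: measurable_snd.
exact: measurableT_comp measurable_snd measurable_fst.
Qed.

Let mphi2 : measurable_fun setT (fun q : (Theta * Y) * Theta => phi q.2 q.1.2).
Proof. exact: measurableT_comp mphi mpair2. Qed.

Let mf2 : measurable_fun setT (fun q : (Theta * Y) * Theta => f q.2 q.1.2).
Proof. exact: measurableT_comp mf mpair2. Qed.

Let mf1 : measurable_fun setT (fun q : (Theta * Y) * Theta => f q.1.1 q.1.2).
Proof. exact: measurableT_comp mf measurable_fst. Qed.

Lemma measurable_prob_below :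
  measurable_fun setT (fun z : Theta * Y => prob_below z.1 z.2).
Proof.
apply: measurable_fun_Rintegral => // [|z t]; last by rewrite mulr_ge0.
apply: measurable_funM mphi2 (measurable_natr_bool _).
exact: measurable_fun_ltr mf2 mf1.
Qed.

Lemma measurable_prob_tie :
  measurable_fun setT (fun z : Theta * Y => prob_tie z.1 z.2).
Proof.
apply: measurable_fun_Rintegral => // [|z t]; last by rewrite mulr_ge0.
apply: measurable_funM mphi2 (measurable_natr_bool _).
exact: measurable_fun_eqr mf2 mf1.
Qed.

Section post_avg_bounded.
Variable g : Theta -> Y -> R.
Hypothesis mg : measurable_fun setT (fun z : Theta * Y => g z.1 z.2).
Hypothesis g01 : forall tht y, 0 <= g tht y <= 1.

Lemma integrable_post_avg y :
  muT.-integrable setT (EFin \o (fun tht => post tht y * g tht y)).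
Proof.
apply: integrableM_01 (integrable_post y) _ (g01^~ y).
exact: measurable_fun_pair1 mg.
Qed.

Lemma measurable_post_avg : measurable_fun setT (post_avg g).
Proof.
apply: measurable_fun_Rintegral => // [|y t]; last first.
  by rewrite mulr_ge0 ?post_ge0 //; case/andP: (g01 t y).
apply: measurable_funM.
  exact: measurableT_comp measurable_post mswap.
exact: measurableT_comp mg mswap.
Qed.

Lemma post_avg_bounds y : 0 <= post_avg g y <= posterior_mass y.
Proof.
apply/andP; split.
  by apply: Rintegral_ge0 => t _; rewrite mulr_ge0 ?post_ge0 //; case/andP: (g01 t y).
apply: le_Rintegral => //; first exact: integrable_post_avg.
  by apply: eq_integrable (integrable_post y) => // t _ /=; rewrite mulr1.
by move=> t _; rewrite ler_wpM2l ?post_ge0 //; case/andP: (g01 t y).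
Qed.

End post_avg_bounded.

Lemma R_rank01 M i tht y : 0 <= R_rank muT phi f M i tht y <= 1.
Proof.
have [b0 t0 bt1] := prob_below_tie tht y.
rewrite R_rankE; apply/andP; split.
  rewrite -[X in X <= _](trinomial_expect_cst (prob_below tht y) (prob_tie tht y) M).
  by apply: ler_trinomial_expect => // l e _; rewrite discrete_rank_cdfE clamp01_ge0.
rewrite -[X in _ <= X](trinomial_expect_cst (prob_below tht y) (prob_tie tht y) M).
by apply: ler_trinomial_expect => // l e _; rewrite discrete_rank_cdfE clamp01_le1.
Qed.

Lemma r_cont01 x tht y : 0 <= r_cont muT phi f x tht y <= 1.
Proof. by rewrite r_contE continuous_rank_cdf_ge0 continuous_rank_cdf_le1. Qed.

Lemma measurable_R_rank M i :
  measurable_fun setT (fun z : Theta * Y => R_rank muT phi f M i z.1 z.2).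
Proof.
rewrite (_ : (fun z => _) = fun z : Theta * Y => trinomial_expect
  (prob_below z.1 z.2) (prob_tie z.1 z.2) M (discrete_rank_cdf i)).
  exact: (measurable_trinomial_expect measurable_prob_below measurable_prob_tie M).
by apply/funext => z; rewrite R_rankE.
Qed.

Lemma measurable_r_cont x :
  measurable_fun setT (fun z : Theta * Y => r_cont muT phi f x z.1 z.2).
Proof.
rewrite (_ : (fun z => _) = fun z : Theta * Y =>
  continuous_rank_cdf x (prob_below z.1 z.2) (prob_tie z.1 z.2)).
  exact: (measurable_continuous_rank_cdf measurable_prob_below measurable_prob_tie x).
by apply/funext => z; rewrite r_contE.
Qed.

Lemma Q_rank_diag M y : Q_rank muT phi f prior obs M M y = posterior_mass y.
Proof.
apply: eq_Rintegral => tht _; congr (_ * _); rewrite R_rankE.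
rewrite (@eq_trinomial_expect _ _ _ _ _ (fun _ _ => 1)) ?trinomial_expect_cst //.
by move=> l e; exact: discrete_rank_cdf_eq1.
Qed.

Section rank_bounds.
Variables (y : Y) (x δ : R) (M i : nat).
Hypotheses (δ0 : 0 < δ) (δM : 3 <= δ * M%:R).

Let c := 9 / (δ ^+ 2 * M%:R).

Let integrable_post1 : muT.-integrable setT (EFin \o (fun tht => post tht y * 1)).
Proof. by apply: eq_integrable (integrable_post y) => // t _ /=; rewrite mulr1. Qed.

Let integrable_c_post := integrableZl measurableT c integrable_post1.
Let integrable_q := integrable_post_avg (measurable_r_cont x) (r_cont01 x) y.
Let integrable_Q := integrable_post_avg (measurable_R_rank M i) (R_rank01 M i) y.

Lemma Q_rank_ge : (x + δ) * M%:R <= i%:R ->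
  q_cont muT phi f prior obs x y - 9 * posterior_mass y / (δ ^+ 2 * M%:R) <=
  Q_rank muT phi f prior obs M i y.
Proof.
move=> xi; rewrite mulrAC -/c.
have -> : q_cont muT phi f prior obs x y - c * posterior_mass y =
    Rintegral muT setT (fun t => post t y * r_cont muT phi f x t y - c * (post t y * 1)).
  by rewrite RintegralB // RintegralZl.
apply: le_Rintegral => //.
  exact: (integrableB measurableT integrable_q integrable_c_post).
move=> t _; rewrite mulr1 [c * _]mulrC -mulrBr ler_wpM2l ?post_ge0 //.
rewrite r_contE R_rankE; have [b0 t0 bt1] := prob_below_tie t y.
exact: trinomial_expect_rank_cdf_ge.
Qed.

Lemma Q_rank_le : i%:R <= (x - δ) * M%:R ->
  Q_rank muT phi f prior obs M i y <=
  q_cont muT phi f prior obs x y + 9 * posterior_mass y / (δ ^+ 2 * M%:R).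
Proof.
move=> xi; rewrite mulrAC -/c.
have -> : q_cont muT phi f prior obs x y + c * posterior_mass y =
    Rintegral muT setT (fun t => post t y * r_cont muT phi f x t y + c * (post t y * 1)).
  by rewrite RintegralD // RintegralZl.
apply: le_Rintegral => //.
  exact: (integrableD measurableT integrable_q integrable_c_post).
move=> t _; rewrite mulr1 [c * _]mulrC -mulrDr ler_wpM2l ?post_ge0 //.
rewrite r_contE R_rankE; have [b0 t0 bt1] := prob_below_tie t y.
exact: trinomial_expect_rank_cdf_le.
Qed.

End rank_bounds.

Lemma q_cont_eq_of_ranks_uniform y :
  ranks_tend_to_uniform (fun M i => Q_rank muT phi f prior obs M i y) ->
  forall x, 0 <= x <= 1 -> q_cont muT phi f prior obs x y = x.
Proof.
move=> QU x x01; have mass1 := ranks_tend_to_uniform_diag QU (Q_rank_diag ^~ y).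
have q01 := post_avg_bounds (measurable_r_cont x) (r_cont01 x) y.
rewrite mass1 in q01.
apply: (rank_limit_eq (C := 9 * posterior_mass y) QU x01 q01).
- by move=> δ M i δ0 δM; exact: Q_rank_ge.
- by move=> δ M i δ0 δM; exact: Q_rank_le.
Qed.

Variable muY : {measure set Y -> \bar R}.

Let mass_marg y := posterior_mass y * marg y.

Let one01 (tht : Theta) (y : Y) : 0 <= (1 : R) <= 1.
Proof. by rewrite ler01 lexx. Qed.

Let measurable_mass_marg : measurable_fun setT mass_marg.
Proof.
apply: measurable_funM; last exact: measurable_marg.
exact: (measurable_post_avg (g := fun _ _ => 1) (measurable_cst (1 : R)) one01).
Qed.

Let mass_marg_ge0 y : 0 <= mass_marg y.
Proof.
rewrite mulr_ge0 ?marg_ge0 //.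
by case/andP: (post_avg_bounds (g := fun _ _ => 1) (measurable_cst (1 : R)) one01 y).
Qed.

Lemma integrable_mass_marg : Rintegral muY setT mass_marg = 1 ->
  muY.-integrable setT (EFin \o mass_marg).
Proof.
move=> mass1; apply: integrable_ge0 => //; rewrite ltey; apply: contra_eq_neq mass1.
by rewrite /Rintegral => ->; rewrite eq_sym oner_neq0.
Qed.

Section post_avg_marg.
Variable g : Theta -> Y -> R.
Hypothesis mg : measurable_fun setT (fun z : Theta * Y => g z.1 z.2).
Hypothesis g01 : forall tht y, 0 <= g tht y <= 1.

Lemma post_avg_marg_bounds y : 0 <= post_avg g y * marg y <= mass_marg y.
Proof.
have /andP[g0 gmass] := post_avg_bounds mg g01 y.
by rewrite mulr_ge0 ?marg_ge0 // ler_wpM2r ?marg_ge0.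
Qed.

Lemma integrable_post_avg_marg : muY.-integrable setT (EFin \o mass_marg) ->
  muY.-integrable setT (EFin \o (fun y => post_avg g y * marg y)).
Proof.
move=> imass; apply: integrable_dominated imass _ _.
  exact: measurable_funM (measurable_post_avg mg g01) measurable_marg.
move=> y; have /andP[gm0 gm] := post_avg_marg_bounds y.
by rewrite !ger0_norm // (le_trans gm0 gm).
Qed.

End post_avg_marg.

Lemma passes_continuous_SBC_of_ranks_uniform :
  ranks_tend_to_uniform (fun M i =>
    Rintegral muY setT (fun y => Q_rank muT phi f prior obs M i y * marg y)) ->
  passes_continuous_SBC muT muY prior obs phi f.
Proof.
move=> QU x x01.
have QMM M : Rintegral muY setT (fun y => Q_rank muT phi f prior obs M M y * marg y) =
    Rintegral muY setT mass_marg.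
  by apply: eq_Rintegral => y _; rewrite Q_rank_diag.
have mass1 := ranks_tend_to_uniform_diag QU QMM.
have imass := integrable_mass_marg mass1.
have iq := integrable_post_avg_marg (measurable_r_cont x) (r_cont01 x) imass.
have iQ M i := integrable_post_avg_marg (measurable_R_rank M i) (R_rank01 M i) imass.
have ic c := integrableZl measurableT c imass.
apply: (rank_limit_eq (C := 9 * Rintegral muY setT mass_marg) QU x01).
- have qm := post_avg_marg_bounds (measurable_r_cont x) (r_cont01 x).
  apply/andP; split; first by apply: Rintegral_ge0 => y _; case/andP: (qm y).
  by rewrite -mass1; apply: le_Rintegral => // y _; case/andP: (qm y).
- move=> δ M i δ0 δM xi; have icδ := ic (9 / (δ ^+ 2 * M%:R)).
  rewrite mulrAC -RintegralZl // -RintegralB //.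
  apply: le_Rintegral => //; [exact: (integrableB measurableT iq icδ)|exact: iQ|].
  move=> y _; rewrite /mass_marg mulrA -mulrBl ler_wpM2r ?marg_ge0 // -mulrAC.
  exact: Q_rank_ge.
- move=> δ M i δ0 δM xi; have icδ := ic (9 / (δ ^+ 2 * M%:R)).
  rewrite mulrAC -RintegralZl // -RintegralD //.
  apply: le_Rintegral => //; [exact: iQ|exact: (integrableD measurableT iq icδ)|].
  move=> y _; rewrite /mass_marg mulrA -mulrDl ler_wpM2r ?marg_ge0 // -mulrAC.
  exact: Q_rank_le.
Qed.
End sbc_model.

Theorem theorem2 (R : realType) (d1 d2 : measure_display)
  (Theta : measurableType d1) (Y : measurableType d2)
  (muT : {measure set Theta -> \bar R}) (muY : {measure set Y -> \bar R})
  (prior : Theta -> R) (obs : Theta -> Y -> R)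
  (phi : Theta -> Y -> R) (f : Theta -> Y -> R) :
  (* reference measures *)
  sigma_finite setT muT -> sigma_finite setT muY ->
  (* model pi: prior density and observation density *)
  measurable_fun setT prior -> (forall th, 0 <= prior th) ->
  (\int[muT]_th (prior th)%:E = 1)%E ->
  measurable_fun setT (fun p : Theta * Y => obs p.1 p.2) ->
  (forall th y, 0 <= obs th y) ->
  (forall th, (\int[muY]_y (obs th y)%:E = 1)%E) ->
  (* posterior family phi *)
  measurable_fun setT (fun p : Theta * Y => phi p.1 p.2) ->
  (forall th y, 0 <= phi th y) ->
  (forall y, (\int[muT]_th (phi th y)%:E = 1)%E) ->
  (* test quantity f *)
  measurable_fun setT (fun p : Theta * Y => f p.1 p.2) ->
  (* (1) *)
  (forall y : Y,
     (forall e : R, 0 < e -> exists N : nat, forall M : nat, (N <= M)%N ->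
        forall i : nat, (i <= M)%N ->
          `| Q_rank muT phi f prior obs M i y - i.+1%:R / M.+1%:R | < e) ->
     forall x : R, 0 <= x <= 1 -> q_cont muT phi f prior obs x y = x)
  /\
  (* (2) *)
  ((forall e : R, 0 < e -> exists N : nat, forall M : nat, (N <= M)%N ->
        forall i : nat, (i <= M)%N ->
          `| Rintegral muY setT
               (fun y => Q_rank muT phi f prior obs M i y * pi_marg muT prior obs y)
             - i.+1%:R / M.+1%:R | < e) ->
   passes_continuous_SBC muT muY prior obs phi f).
Proof.
move=> muT_sf _ mprior prior0 _ mobs obs0 _ mphi phi0 phi1 mf; split.
- exact: (q_cont_eq_of_ranks_uniform muT_sf mprior prior0 mobs obs0 mphi phi0 phi1 mf).
- exact: (passes_continuous_SBC_of_ranks_uniform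
    muT_sf mprior prior0 mobs obs0 mphi phi0 phi1 mf).
Qed.
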